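(* If $G$ is a $4$-regular graph on $7$ vertices, then $\mu(G)\le 3$.
   Context: All graphs are finite and simple. For a graph $G=(V,E)$ on $n$ vertices, a fractional vertex cover is a function $f:V\to[0,\infty)$ with $f(u)+f(v)\ge 1$ for every edge $uv\in E$; $\tau^*(G)$ denotes the minimum of $\sum_{v\in V}f(v)$ over all fractional vertex covers. For $E'\subseteq E$ let $G-E'=(V,E\setminus E')$. Define $\mu(G)=\min\{|E'| : E'\subseteq E,\ \tau^*(G-E')<n/2\}$. *)

From HB Require Import structures.
From mathcomp Require Import all_boot all_order all_algebra.
From mathcomp Require Import classical_sets reals.
Set Implicit Arguments. Unset Strict Implicit. Unset Printing Implicit Defensive.
Import Order.TTheory GRing.Theory Num.Theory.
Local Open Scope ring_scope.

(* A finite simple graph on vertex type T is given by its edge set E: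
   a set of 2-element subsets of T. *)
Definition simple_edges (T : finType) (E : {set {set T}}) : Prop :=
  forall e, e \in E -> #|e| = 2%N.

Definition degree (T : finType) (E : {set {set T}}) (v : T) : nat :=
  #|[set e in E | v \in e]|.

Definition regular (T : finType) (E : {set {set T}}) (k : nat) : Prop :=
  forall v, degree E v = k.

Definition frac_cover (R : realType) (T : finType) (E : {set {set T}})
  (f : T -> R) : Prop :=
  (forall v, 0 <= f v) /\
  (forall u v, u != v -> [set u; v] \in E -> 1 <= f u + f v).

(* tau^*(G): minimum (= infimum, attained) of the total weight of a
   fractional vertex cover *)
Definition tau_star (R : realType) (T : finType) (E : {set {set T}}) : R :=
  inf [set s : R | exists f : T -> R, frac_cover E f /\ s = \sum_(v : T) f v].

Definition del_edges (T : finType) (E E' : {set {set T}}) : {set {set T}} :=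
  E :\: E'.

(* The complement of a 4-regular graph on 7 vertices is 2-regular, so it contains
   non-edges vx, vy and xz with x <> y and z <> v: a path y-v-x-z, or a triangle
   when z = y.  A 4-set B containing v, x, y, z therefore spans at most
   C(4,2) - 3 = 3 edges of G.  Deleting them makes B independent, and then the
   indicator of the 3 vertices outside B is a fractional cover of weight 3 < 7/2. *)

From mathcomp Require Import all_boot all_order all_algebra.
From mathcomp Require Import reals zify.
Import Order.TTheory GRing.Theory Num.Theory.
Set Implicit Arguments. Unset Strict Implicit.

Definition independent (T : finType) (E : {set {set T}}) (B : {set T}) : Prop :=
  forall e, e \in E -> ~~ (e \subset B).

Definition edges_within (T : finType) (E : {set {set T}}) (B : {set T}) :=
  [set e in E | e \subset B].

Section FractionalCover.
Local Open Scope ring_scope.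

Lemma tau_star_le_card_compl (R : realType) (T : finType) (E : {set {set T}})
    (B : {set T}) :
  independent E B -> tau_star R E <= #|~: B|%:R.
Proof.
move=> indepB; apply: ge_inf.
  by exists 0 => _ [f [[f_ge0 _] ->]]; exact: sumr_ge0.
exists (fun v => if v \in ~: B then 1 else 0); split.
  split=> [v|u v _ uvE]; first by case: ifP.
  have := indepB _ uvE; rewrite subUset !sub1set !inE.
  by case: (u \in B); case: (v \in B); rewrite ?addr0 ?add0r ?lerDl.
by rewrite -big_mkcond sumr_const.
Qed.

End FractionalCover.

Lemma independent_del_edges_within (T : finType) (E : {set {set T}}) (B : {set T}) :
  independent (del_edges E (edges_within E B)) B.
Proof. by move=> e; rewrite !inE; case: (e \in E); case: (e \subset B). Qed.

Lemma exists_superset_card (T : finType) (S : {set T}) k :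
  #|S| <= k <= #|T| -> exists2 B : {set T}, S \subset B & #|B| = k.
Proof.
elim: k => [|k IHk] /andP[leSk lekT].
  by exists S => //; apply/eqP; rewrite -leqn0.
have [<- | neSk] := eqVneq #|S| k.+1; first by exists S.
have [B sSB cardB] : exists2 B : {set T}, S \subset B & #|B| = k.
  by apply: IHk; rewrite -ltnS ltn_neqAle neSk leSk ltnW.
have /card_gt0P [w wB] : 0 < #|~: B| by rewrite -(cardsC B) cardB in lekT; lia.
exists (w |: B); first exact: subset_trans sSB (subsetU1 w B).
by rewrite cardsU1 -in_setC wB cardB.
Qed.

Lemma cards3 (T : finType) (a b c : T) :
  a != b -> a != c -> b != c -> #|[set a; b; c]| = 3.
Proof.
by move=> ab ac bc; rewrite setUC cardsU1 cards2 !inE ab negb_or !(eq_sym c) ac bc.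
Qed.

Section Graph.
Variables (T : finType) (E : {set {set T}}).

Definition nbr (v : T) : {set T} := [set u | [set v; u] \in E].

Definition non_nbr (v : T) : {set T} := ~: nbr v :\ v.

Lemma mem_non_nbr v u : (u \in non_nbr v) = (u != v) && ([set v; u] \notin E).
Proof. by rewrite !inE. Qed.

Hypothesis simpleE : simple_edges E.

Lemma nbr_neq v u : u \in nbr v -> u != v.
Proof.
by rewrite inE => /simpleE; apply: contra_eqN => /eqP ->; rewrite setUid cards1.
Qed.

Lemma edges_at_nbr v : [set e in E | v \in e] = [set [set v; u] | u in nbr v].
Proof.
apply/setP => e; rewrite inE; apply/andP/imsetP => [[eE ve] | [u uN ->]].
  have /eqP/cards2P [a [b [_ e_ab]]] := simpleE eE.
  move: ve eE; rewrite e_ab !inE => /orP[]/eqP -> abE; first by exists b; rewrite ?inE.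
  by exists a; rewrite ?inE setUC.
by split; [rewrite inE in uN | rewrite !inE eqxx].
Qed.

Lemma card_nbr v : #|nbr v| = degree E v.
Proof.
rewrite /degree edges_at_nbr card_in_imset // => a b aN _ ab_eq.
have : a \in [set v; b] by rewrite -ab_eq !inE eqxx orbT.
by rewrite !inE (negbTE (nbr_neq aN)) => /eqP.
Qed.

Lemma card_non_nbr v : #|non_nbr v| = #|T| - (degree E v).+1.
Proof.
have v_nbrC : v \in ~: nbr v by rewrite inE; apply/negP => /nbr_neq/eqP.
by rewrite /non_nbr -card_nbr -(cardsC (nbr v)) (cardsD1 v (~: nbr v)) v_nbrC; lia.
Qed.

Lemma card_edges_within_add_le (B : {set T}) (N : {set {set T}}) :
  N \subset [set e : {set T} | e \subset B & #|e| == 2] -> [disjoint N & E] ->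
  #|edges_within E B| + #|N| <= 'C(#|B|, 2).
Proof.
move=> sN_pairs disjNE; rewrite -cards_draws.
have disjWN : [disjoint edges_within E B & N].
  by rewrite disjoint_sym; apply: disjointWr disjNE; apply/subsetP => e /setIdP[].
have := (leq_card_setU (edges_within E B) N).2; rewrite disjWN => /eqP <-.
apply: subset_leq_card.
rewrite subUset sN_pairs andbT; apply/subsetP => e /setIdP[/simpleE e2 seB].
by rewrite inE seB e2.
Qed.

Lemma exists_non_edge_walk :
  0 < #|T| -> (forall v, 1 < #|non_nbr v|) ->
  exists v x y z,
    [/\ x \in non_nbr v, y \in non_nbr v, z \in non_nbr x, x != y & z != v].
Proof.
move=> /card_gt0P [v _] non_nbr_gt1.
have /card_gt1P [x [y [xv yv xy]]] := non_nbr_gt1 v.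
have /card_gt1P [z1 [z2 [z1x z2x z12]]] := non_nbr_gt1 x.
exists v, x, y; have [z1v | z1v] := eqVneq z1 v.
  by exists z2; split; rewrite // -z1v eq_sym.
by exists z1.
Qed.

Lemma exists_sparse_quadruple :
  4 <= #|T| -> (forall v, 1 < #|non_nbr v|) ->
  exists2 B : {set T}, #|B| = 4 & #|edges_within E B| <= 3.
Proof.
move=> leT4 non_nbr_gt1.
have T_gt0 : 0 < #|T| by apply: leq_trans leT4.
have [v [x [y [z []]]]] := exists_non_edge_walk T_gt0 non_nbr_gt1.
rewrite !mem_non_nbr => /andP[xv vxE] /andP[yv vyE] /andP[zx xzE] xy zv.
have [B sB cardB] : exists2 B : {set T}, [set v; x; y; z] \subset B & #|B| = 4.
  apply: exists_superset_card; rewrite leT4 andbT.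
  by rewrite !cardsU !cards1; lia.
exists B => //.
pose N := [set [set v; x]; [set v; y]; [set x; z]].
have cardN : #|N| = 3.
  apply: cards3; apply/eqP => /setP.
  - by move/(_ y); rewrite !inE eqxx orbT (negbTE yv) eq_sym (negbTE xy).
  - by move/(_ z); rewrite !inE eqxx orbT (negbTE zv) (negbTE zx).
  - by move/(_ x); rewrite !inE eqxx (negbTE xv) (negbTE xy).
have sN : N \subset [set e : {set T} | e \subset B & #|e| == 2].
  have pairB a b : a \in [set v; x; y; z] -> b \in [set v; x; y; z] -> b != a ->
      ([set a; b] \subset B) && (#|[set a; b]| == 2).
    move=> /(subsetP sB) aB /(subsetP sB) bB ba.
    by rewrite subUset !sub1set aB bB cards2 (eq_sym a) ba.
  apply/subsetP => e; rewrite !inE -orbA => /or3P[]/eqP ->;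
    by apply: pairB; rewrite ?inE ?eqxx ?orbT.
have dN : [disjoint N & E].
  by rewrite disjoint_subset; apply/subsetP => e; rewrite !inE -orbA => /or3P[]/eqP ->.
have := card_edges_within_add_le sN dN; rewrite cardB cardN.
by rewrite -[X in (_ <= X)]/(3 + 3) leq_add2r.
Qed.

End Graph.

Local Open Scope ring_scope.

Theorem lemma32 (R : realType) (T : finType) (E : {set {set T}}) :
  #|T| = 7%N -> simple_edges E -> regular E 4 ->
  exists E' : {set {set T}},
    [/\ E' \subset E, (#|E'| <= 3)%N &
        tau_star R (del_edges E E') < (#|T|%:R / 2)].
Proof.
move=> card7 simpleE regE.
have [B cardB sparseB] : exists2 B : {set T}, #|B| = 4%N & (#|edges_within E B| <= 3)%N.
  apply: exists_sparse_quadruple => // [|v]; first by rewrite card7.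
  by rewrite card_non_nbr // regE card7.
exists (edges_within E B); split => //; first by apply/subsetP => e /setIdP[].
apply: le_lt_trans (tau_star_le_card_compl R (@independent_del_edges_within _ E B)) _.
have -> : #|~: B| = 3%N by have := cardsC B; rewrite cardB card7; lia.
by rewrite card7 ltr_pdivlMr // -natrM ltr_nat.
Qed.
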